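(* Let $\delta$ be an ordinal with $\mathrm{cf}(\omega^\delta)=\kappa\ge\omega$, and suppose $\omega^\delta=\sum_{\xi<\kappa}\omega^{\delta_\xi}$, where $\delta_\xi\le\delta_\zeta$ whenever $\xi<\zeta<\kappa$, and $\mathrm{cf}(\omega^{\delta_\xi})\ge\kappa$ for all $\xi<\kappa$. Then $\mathcal P_\kappa\hookrightarrow_c\mathrm{sq}\,\mathbb P(\omega^\delta)$.
   Context: $\mathbb P(\omega^\delta)$ is the poset of subsets of $\omega^\delta$ order-isomorphic to $\omega^\delta$, ordered by $\subset$; $\mathrm{sq}$ denotes separative quotient (antisymmetric quotient of the separative modification $p\le^*q\iff\forall r\le p\,\exists s\le r\, s\le q$). For a cardinal $\kappa$, $\mathcal P_\kappa=(P(\kappa)/[\kappa]^{<\kappa})^+$, the nonzero elements of the quotient of $P(\kappa)$ by the ideal of subsets of size $<\kappa$. A map $f:\mathbb P\to\mathbb Q$ between preorders is a complete embedding ($\hookrightarrow_c$) iff (1) $p_1\le p_2\Rightarrow f(p_1)\le f(p_2)$; (2) $p_1\perp p_2\iff f(p_1)\perp f(p_2)$; (3) for every $q\in\mathbb Q$ there is $p\in\mathbb P$ such that $f(p')$ is compatible with $q$ for all $p'\le p$. $\mathbb P\hookrightarrow_c\mathbb Q$ means such an $f$ exists. *)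

From Stdlib Require Import List.

(** Linear orders (carrier + strict order relation). An ordinal is represented
    by a type with a strict well-order (its order type). *)
Record LO := mkLO { car :> Type; lt : car -> car -> Prop }.
Arguments lt {_}.

Definition le {A : LO} (x y : A) := lt x y \/ x = y.

Definition is_wellorder (A : LO) : Prop :=
  (forall x : A, ~ lt x x) /\
  (forall x y z : A, lt x y -> lt y z -> lt x z) /\
  (forall x y : A, lt x y \/ x = y \/ lt y x) /\
  well_founded (@lt A).

Definition strict_mono {A B : LO} (f : A -> B) :=
  forall x y, lt x y -> lt (f x) (f y).

Definition order_iso {A B : LO} (f : A -> B) :=
  (exists g : B -> A, (forall x, g (f x) = x) /\ (forall y, f (g y) = y)) /\
  (forall x y, lt x y <-> lt (f x) (f y)).
Definition ord_iso (A B : LO) := exists f : A -> B, order_iso f.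

Definition ord_le (A B : LO) :=
  exists f : A -> B, strict_mono f /\
    (forall x y, lt y (f x) -> exists z, f z = y).

Definition natLO : LO := mkLO nat Peano.lt.

Definition cofinal_map {A B : LO} (f : A -> B) := forall b, exists a, le b (f a).
Definition cf_ge (A K : LO) : Prop :=
  forall B : LO, is_wellorder B -> forall g : B -> A,
    strict_mono g -> cofinal_map g -> ord_le K B.
Definition cf_eq (A K : LO) : Prop :=
  (exists f : K -> A, strict_mono f /\ cofinal_map f) /\ cf_ge A K.

(** omega^D : finitely supported functions D -> nat, compared at the
    largest index where they differ (Cantor normal form). *)
Definition fin_supp (D : LO) (f : D -> nat) :=
  exists l : list D, forall d, f d <> 0 -> In d l.
Definition omega_pow (D : LO) : LO :=
  mkLO {f : D -> nat | fin_supp D f}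
    (fun f g => exists d, proj1_sig f d < proj1_sig g d /\
       forall e, lt d e -> proj1_sig f e = proj1_sig g e).

Definition osum (K : LO) (A : K -> LO) : LO :=
  mkLO {x : K & A x}
    (fun a b => lt (projT1 a) (projT1 b) \/
       exists e : projT1 a = projT1 b,
         lt (eq_rect _ (fun x => car (A x)) (projT2 a) _ e) (projT2 b)).

Definition subLO (A : LO) (X : A -> Prop) : LO :=
  mkLO {x : A | X x} (fun x y => lt (proj1_sig x) (proj1_sig y)).

Record PO := mkPO { pcar :> Type; ple : pcar -> pcar -> Prop }.
Arguments ple {_}.

Definition compat {P : PO} (p q : P) := exists r, ple r p /\ ple r q.

Definition complete_emb {P Q : PO} (f : P -> Q) : Prop :=
  (forall p1 p2, ple p1 p2 -> ple (f p1) (f p2)) /\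
  (forall p1 p2, ~ compat p1 p2 <-> ~ compat (f p1) (f p2)) /\
  (forall q : Q, exists p : P, forall p', ple p' p -> compat (f p') q).

Definition Ppow (D : LO) : PO :=
  mkPO {X : omega_pow D -> Prop | ord_iso (subLO (omega_pow D) X) (omega_pow D)}
    (fun X Y => forall w, proj1_sig X w -> proj1_sig Y w).

Definition sep_le {P : PO} (p q : P) :=
  forall r, ple r p -> exists s, ple s r /\ ple s q.
Definition sep_equiv {P : PO} (p q : P) := sep_le p q /\ sep_le q p.
Definition sq (P : PO) : PO :=
  mkPO {C : P -> Prop | exists p, C = sep_equiv p}
    (fun C C' => exists p q, proj1_sig C p /\ proj1_sig C' q /\ sep_le p q).

(** P_kappa = (P(kappa)/[kappa]^{<kappa})^+ *)
Definition small (K : LO) (S : K -> Prop) :=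
  ~ exists f : K -> {x | S x}, forall a b, f a = f b -> a = b.
Definition symdiff (K : LO) (A B : K -> Prop) :=
  fun x => (A x /\ ~ B x) \/ (B x /\ ~ A x).
Definition Pkappa (K : LO) : PO :=
  mkPO {C : (K -> Prop) -> Prop |
          exists A, ~ small K A /\ C = (fun B => small K (symdiff K A B))}
    (fun C C' => exists A B, proj1_sig C A /\ proj1_sig C' B /\
        small K (fun x => A x /\ ~ B x)).

From Stdlib Require Import List Wellfounded Wf_nat PeanoNat Lia.
From Stdlib Require Import Classical ClassicalEpsilon FunctionalExtensionality.

(* Write W = omega^D as the ordered sum of the blocks omega^(Dx x), x < K, and let [block w]
   be the index of the block containing w.  Since cf W = K, a subset of K is small iff it is
   bounded.  For unbounded A, the elements of W lying in blocks indexed by A contain a copy of W: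
   enumerate A increasingly by b and stretch each block x into block b x, which is possible
   since Dx x <= Dx (b x).  Sending A to the class of this set is the complete embedding.  Order
   and incompatibility are preserved because a copy of W meets blocks of unboundedly large
   index, so its final segments avoid any bounded set of blocks.  For density, an embedding of
   W into a given copy Y sends a tail of each block x into a single block t x: as
   cf(omega^(Dx x)) >= K, the block indices cannot increase K times while staying below the
   image of the next block.  Any condition below the class of the range of t then meets Y in a
   copy assembled from these block tails. *)

Lemma proj1_sig_inj {A : Type} {P : A -> Prop} (u v : {a | P a}) :
  proj1_sig u = proj1_sig v -> u = v.
Proof. apply eq_sig_hprop. intros; apply proof_irrelevance. Qed.

Section WellOrder.
Context {X : LO} (HX : is_wellorder X).

Lemma wo_irrefl (x : X) : ~ lt x x. Proof. apply HX. Qed.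
Lemma wo_trans (x y z : X) : lt x y -> lt y z -> lt x z. Proof. apply HX. Qed.
Lemma wo_total (x y : X) : lt x y \/ x = y \/ lt y x. Proof. apply HX. Qed.
Lemma wo_wf : well_founded (@lt X). Proof. apply HX. Qed.

Lemma wo_asym (x y : X) : lt x y -> lt y x -> False.
Proof. intros H1 H2. exact (wo_irrefl x (wo_trans _ _ _ H1 H2)). Qed.

Lemma wo_lt_le_trans (x y z : X) : lt x y -> le y z -> lt x z.
Proof. intros H [H' | <-]; [eapply wo_trans; eauto | auto]. Qed.

Lemma wo_le_lt_trans (x y z : X) : le x y -> lt y z -> lt x z.
Proof. intros [H | ->] H'; [eapply wo_trans; eauto | auto]. Qed.

Lemma wo_le_trans (x y z : X) : le x y -> le y z -> le x z.
Proof. intros [H | ->] H'; [left; eapply wo_lt_le_trans; eauto | auto]. Qed.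

Lemma wo_not_lt (x y : X) : ~ lt x y -> le y x.
Proof. intros H. destruct (wo_total x y) as [? | [-> | ?]]; [tauto | right | left]; auto. Qed.

Lemma wo_not_le (x y : X) : ~ le x y -> lt y x.
Proof.
  intros H. destruct (wo_total x y) as [? | [-> | ?]]; auto; exfalso; apply H; [left | right]; auto.
Qed.

Lemma wo_le_not_lt (x y : X) : le x y -> ~ lt y x.
Proof. intros H H'. apply (wo_irrefl x). eapply wo_le_lt_trans; eauto. Qed.

Lemma wo_le_antisym (x y : X) : le x y -> le y x -> x = y.
Proof. intros [H | H] H'; auto. exfalso; eapply wo_le_not_lt; eauto. Qed.

Lemma strict_mono_ge_id (h : X -> X) : strict_mono h -> forall x, le x (h x).
Proof.
  intros Hh x. induction x as [x IH] using (well_founded_ind wo_wf).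
  apply wo_not_lt. intros Hlt. exact (wo_le_not_lt _ _ (IH _ Hlt) (Hh _ _ Hlt)).
Qed.

Lemma wo_least_exists (P : X -> Prop) :
  (exists x, P x) -> exists m, P m /\ forall y, P y -> le m y.
Proof.
  intros [x Hx]. revert Hx. induction x as [x IH] using (well_founded_ind wo_wf). intros Hx.
  destruct (classic (exists y, P y /\ lt y x)) as [[y [Hy Hyx]] | Hn].
  - exact (IH y Hyx Hy).
  - exists x. split; auto. intros y Hy. apply wo_not_lt. intro. apply Hn; eauto.
Qed.

Lemma wo_finite_max (l : list X) (P : X -> Prop) :
  (forall x, P x -> In x l) -> (exists x, P x) -> exists m, P m /\ forall x, P x -> le x m.
Proof.
  revert P; induction l as [| a l IH]; intros P Hl [x Hx].
  - destruct (Hl x Hx).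
  - destruct (classic (exists y, P y /\ y <> a)) as [Hy | Hn].
    + destruct (IH (fun y => P y /\ y <> a)) as [m [[Hm _] Hmax]].
      { intros y [Py Hya]. destruct (Hl y Py); [congruence | auto]. }
      { exact Hy. }
      destruct (classic (P a /\ lt m a)) as [[Pa Hma] | Ha].
      * exists a. split; auto. intros y Py. destruct (classic (y = a)) as [-> | Hya]; [now right |].
        left. apply (wo_le_lt_trans _ m); auto.
      * exists m. split; auto. intros y Py. destruct (classic (y = a)) as [-> | Hya]; auto.
        apply wo_not_lt. tauto.
    + exists x. split; auto. intros y Py.
      assert (x = a) by (apply NNPP; intro; apply Hn; eauto).
      assert (y = a) by (apply NNPP; intro; apply Hn; eauto). subst. now right.
Qed.

(* A total choice of least element; the default [d] is returned when [P] is empty. *)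
Definition wo_least (P : X -> Prop) (d : X) : X :=
  match excluded_middle_informative (exists m, P m /\ forall y, P y -> le m y) with
  | left H => proj1_sig (constructive_indefinite_description _ H)
  | right _ => d
  end.

Lemma wo_least_spec P d :
  (exists x, P x) -> P (wo_least P d) /\ forall y, P y -> le (wo_least P d) y.
Proof.
  intros H. unfold wo_least. destruct excluded_middle_informative as [H' | H'].
  - destruct constructive_indefinite_description; simpl; auto.
  - exfalso; apply H', wo_least_exists, H.
Qed.
End WellOrder.

Section StrictMono.
Context {A B : LO} (HA : is_wellorder A) (HB : is_wellorder B) (f : A -> B) (Hf : strict_mono f).

Lemma strict_mono_reflect x y : lt (f x) (f y) -> lt x y.
Proof.
  intros H. destruct (wo_total HA x y) as [? | [-> | Hl]]; auto; exfalso.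
  - exact (wo_irrefl HB _ H).
  - exact (wo_asym HB _ _ H (Hf _ _ Hl)).
Qed.

Lemma strict_mono_inj x y : f x = f y -> x = y.
Proof.
  intros H. destruct (wo_total HA x y) as [Hl | [-> | Hl]]; auto; apply Hf in Hl;
    rewrite H in Hl; exfalso; exact (wo_irrefl HB _ Hl).
Qed.
End StrictMono.

Lemma strict_mono_le {A B : LO} (f : A -> B) :
  strict_mono f -> forall x y, le x y -> le (f x) (f y).
Proof. intros Hf x y [H | ->]; [left; auto | right; auto]. Qed.

Lemma wellorder_pullback (X : LO) (Y : Type) (g : Y -> X) :
  is_wellorder X -> (forall y y', g y = g y' -> y = y') ->
  is_wellorder (mkLO Y (fun y y' => lt (g y) (g y'))).
Proof.
  intros HX Hg. split; [| split; [| split]]; simpl.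
  - intros y. apply (wo_irrefl HX).
  - intros y1 y2 y3. apply (wo_trans HX).
  - intros y y'. destruct (wo_total HX (g y) (g y')) as [? | [e | ?]]; auto.
  - apply (wf_inverse_image _ _ (@lt X) g), HX.
Qed.

Lemma subLO_wellorder (X : LO) (Z : X -> Prop) : is_wellorder X -> is_wellorder (subLO X Z).
Proof. intros HX. apply (wellorder_pullback X _ (@proj1_sig _ _) HX), proj1_sig_inj. Qed.

Lemma ord_iso_sub_enum (X : LO) (Z : X -> Prop) :
  ord_iso (subLO X Z) X -> exists b : X -> X, strict_mono b /\ forall x, Z (b x).
Proof.
  intros [f [[g [_ Hfg]] Hiff]]. exists (fun x => proj1_sig (g x)). split.
  - intros x y H. change (lt (g x) (g y)). apply Hiff. now rewrite !Hfg.
  - intros x. exact (proj2_sig (g x)).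
Qed.

Section OmegaPow.
Context {D : LO} (HD : is_wellorder D).
Notation W := (omega_pow D).

Lemma omega_pow_ext (f g : W) : (forall d, proj1_sig f d = proj1_sig g d) -> f = g.
Proof. intros H. apply proj1_sig_inj, functional_extensionality, H. Qed.

Lemma omega_pow_top (f : W) : (exists d, proj1_sig f d <> 0) ->
  exists m, proj1_sig f m <> 0 /\ forall d, proj1_sig f d <> 0 -> le d m.
Proof. destruct f as [f [l Hl]]; simpl. apply (wo_finite_max HD l); auto. Qed.

Lemma omega_pow_irrefl (f : W) : ~ lt f f.
Proof. intros [d [H _]]. lia. Qed.

Lemma omega_pow_trans (f g h : W) : lt f g -> lt g h -> lt f h.
Proof.
  intros [d1 [H1 E1]] [d2 [H2 E2]].
  destruct (wo_total HD d1 d2) as [Hl | [<- | Hl]].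
  - exists d2. rewrite E1 by exact Hl. split; auto.
    intros e He. rewrite E1, E2; eauto using wo_trans.
  - exists d1. split; [lia |]. intros e He. rewrite E1, E2; auto.
  - exists d1. rewrite <- E2 by exact Hl. split; auto.
    intros e He. rewrite E1, E2; eauto using wo_trans.
Qed.

Lemma omega_pow_total (f g : W) : lt f g \/ f = g \/ lt g f.
Proof.
  destruct (classic (forall d, proj1_sig f d = proj1_sig g d)) as [He | Hn].
  { right; left. now apply omega_pow_ext. }
  destruct f as [f [lf Hf]], g as [g [lg Hg]]; simpl in *.
  destruct (wo_finite_max HD (lf ++ lg) (fun d => f d <> g d)) as [m [Hm Hmax]].
  - intros d Hd. apply in_or_app.
    destruct (Nat.eq_dec (f d) 0); [right; apply Hg | left; apply Hf]; lia.
  - now apply not_all_ex_not.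
  - assert (Habove : forall e, lt m e -> f e = g e).
    { intros e He. apply NNPP. intros Hc. exact (wo_le_not_lt HD _ _ (Hmax e Hc) He). }
    destruct (Nat.lt_gt_cases (f m) (g m)) as [[Hl | Hl] _]; [exact Hm |..].
    + left. exists m. split; auto.
    + right; right. exists m. split; auto. intros e He. symmetry; auto.
Qed.

Definition supp_below (f : W) (d : D) := forall e, proj1_sig f e <> 0 -> lt e d.
Definition supp_le (f : W) (d : D) := forall e, proj1_sig f e <> 0 -> le e d.

Lemma acc_zero (f : W) : (forall e, proj1_sig f e = 0) -> Acc lt f.
Proof. intros H. constructor. intros g [d [Hd _]]. rewrite H in Hd. lia. Qed.

Definition low (d : D) (f : W) : W.
Proof.
  refine (exist _ (fun e => if excluded_middle_informative (lt e d) then proj1_sig f e else 0) _).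
  destruct f as [f [l Hl]]. exists l. intros e. simpl.
  destruct excluded_middle_informative; auto; lia.
Defined.

Lemma low_below d f e : lt e d -> proj1_sig (low d f) e = proj1_sig f e.
Proof. simpl. destruct excluded_middle_informative; tauto. Qed.

Lemma low_above d f e : ~ lt e d -> proj1_sig (low d f) e = 0.
Proof. simpl. destruct excluded_middle_informative; tauto. Qed.

Lemma supp_below_low d f : supp_below (low d f) d.
Proof. intros e He. apply NNPP. intros Hn. now apply He, low_above. Qed.

Lemma supp_le_lt (f g : W) d : supp_le f d -> lt g f -> supp_le g d.
Proof.
  intros Hf [e0 [H0 Habove]] e He. apply (wo_not_lt HD). intros Hde.
  assert (He0 : le e0 d) by (apply Hf; lia).
  rewrite Habove in He by eauto using wo_le_lt_trans.
  exact (wo_le_not_lt HD _ _ (Hf e He) Hde).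
Qed.

(* Lexicographic induction on the pair (coefficient at [d], part below [d]). *)
Lemma acc_supp_le (d : D) :
  (forall f, supp_below f d -> Acc lt f) -> forall f, supp_le f d -> Acc lt f.
Proof.
  intros Hbelow.
  enough (Hlex : forall n (h : W), Acc lt h -> supp_below h d ->
            forall f : W, supp_le f d -> proj1_sig f d = n ->
            (forall e, lt e d -> proj1_sig f e = proj1_sig h e) -> Acc lt f).
  { intros f Hf. apply (Hlex (proj1_sig f d) (low d f)); auto using supp_below_low.
    intros e He. symmetry. now apply low_below. }
  intros n. induction n as [n IHn] using (well_founded_ind lt_wf).
  intros h Ah. induction Ah as [h _ IHh]. intros Hh f Hf Hfd Hfh.
  constructor. intros g Hgf. pose proof (supp_le_lt _ _ _ Hf Hgf) as Hg.
  destruct Hgf as [e0 [H0 Habove]].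
  destruct (Hf e0 ltac:(lia)) as [He0 | <-].
  - apply (IHh (low d g)) with (f := g); auto.
    + exists e0. split.
      * rewrite low_below, <- Hfh; auto.
      * intros e He. destruct (classic (lt e d)) as [Hl | Hl].
        -- rewrite low_below, Habove, Hfh; auto.
        -- rewrite low_above by exact Hl.
           apply NNPP. intros Hn. exact (Hl (Hh e (not_eq_sym Hn))).
    + apply supp_below_low.
    + rewrite Habove; auto.
    + intros e He. symmetry. now apply low_below.
  - apply (IHn (proj1_sig g e0)) with (h := low e0 g); auto using supp_below_low.
    + lia.
    + intros e He. symmetry. now apply low_below.
Qed.

Lemma omega_pow_wf : well_founded (@lt W).
Proof.
  assert (Hle : forall d (f : W), supp_le f d -> Acc lt f).
  { intros d. induction d as [d IHd] using (well_founded_ind (wo_wf HD)).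
    apply acc_supp_le. intros f Hf.
    destruct (classic (exists e, proj1_sig f e <> 0)) as [Hnz | Hz].
    - destruct (omega_pow_top f Hnz) as [m [Hm Hmax]]. exact (IHd m (Hf m Hm) f Hmax).
    - apply acc_zero. intros e. apply NNPP. intro; apply Hz; eauto. }
  intros f. destruct (classic (exists e, proj1_sig f e <> 0)) as [Hnz | Hz].
  - destruct (omega_pow_top f Hnz) as [m [_ Hmax]]. exact (Hle m f Hmax).
  - apply acc_zero. intros e. apply NNPP. intro; apply Hz; eauto.
Qed.

Lemma omega_pow_wellorder : is_wellorder W.
Proof.
  exact (conj omega_pow_irrefl (conj omega_pow_trans (conj omega_pow_total omega_pow_wf))).
Qed.

Definition omega_pow_zero : W :=
  exist _ (fun _ => 0) (ex_intro _ nil (fun d H => False_ind _ (H eq_refl))).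

Lemma omega_pow_zero_le (v : W) : le omega_pow_zero v.
Proof.
  destruct (omega_pow_total omega_pow_zero v) as [? | [? | [d [Hd _]]]]; [left | right |]; auto.
  simpl in Hd. lia.
Qed.

Definition shift (m : D) (k : nat) (v : W) : W.
Proof.
  refine (exist _ (fun e => if excluded_middle_informative (e = m)
                            then proj1_sig v e + k else proj1_sig v e) _).
  destruct v as [v [l Hl]]. exists (m :: l). intros e. simpl.
  destruct excluded_middle_informative; auto.
Defined.

Lemma shift_strict_mono m k : strict_mono (shift m k).
Proof.
  intros v v' [d [H1 H2]]. exists d. simpl. split.
  - destruct excluded_middle_informative; lia.
  - intros e He. destruct excluded_middle_informative; rewrite H2; auto.
Qed.

Lemma lt_shift_succ (m : D) (v : W) : lt v (shift m 1 v).
Proof.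
  exists m. simpl. split.
  - destruct excluded_middle_informative; [lia | congruence].
  - intros e He. destruct excluded_middle_informative; auto.
    subst. exfalso; exact (wo_irrefl HD _ He).
Qed.

Lemma omega_pow_embed_above (u : W) : exists s : W -> W, strict_mono s /\ forall v, le u (s v).
Proof.
  destruct (classic (exists e, proj1_sig u e <> 0)) as [Hnz | Hz].
  - destruct (omega_pow_top u Hnz) as [m [Hm Hmax]].
    exists (shift m (proj1_sig u m + 1)). split; [apply shift_strict_mono |].
    intros v. apply (wo_not_lt omega_pow_wellorder). intros [d [Hd1 Hd2]].
    simpl in Hd1, Hd2.
    assert (Hud : proj1_sig u d <> 0) by (destruct excluded_middle_informative in Hd1; lia).
    destruct (Hmax d Hud) as [Hdm | ->].
    + specialize (Hd2 m Hdm). destruct excluded_middle_informative in Hd2; [lia | congruence].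
    + destruct excluded_middle_informative in Hd1; [lia | congruence].
  - exists (fun v => v). split; [intros ? ? ?; auto |].
    intros v. replace u with omega_pow_zero by
      (apply omega_pow_ext; intros e; simpl; symmetry; apply NNPP; intro; apply Hz; eauto).
    apply omega_pow_zero_le.
Qed.
End OmegaPow.

Section OmegaPowMonotone.
Context {A B : LO} (HA : is_wellorder A) (HB : is_wellorder B) (m : A -> B) (Hm : strict_mono m).

Definition push_coeffs (f : omega_pow A) (b : B) : nat :=
  match excluded_middle_informative (exists a, m a = b) with
  | left H => proj1_sig f (proj1_sig (constructive_indefinite_description _ H))
  | right _ => 0
  end.

Lemma push_coeffs_image f a : push_coeffs f (m a) = proj1_sig f a.
Proof.
  unfold push_coeffs. destruct excluded_middle_informative as [H | H]; [| exfalso; eauto].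
  destruct constructive_indefinite_description as [a' Ha']; simpl.
  apply (strict_mono_inj HA HB m Hm) in Ha'. now subst.
Qed.

Lemma push_coeffs_out f b : ~ (exists a, m a = b) -> push_coeffs f b = 0.
Proof. intros H. unfold push_coeffs. destruct excluded_middle_informative; tauto. Qed.

Definition push (f : omega_pow A) : omega_pow B.
Proof.
  refine (exist _ (push_coeffs f) _).
  destruct f as [f [l Hl]]. exists (map m l). intros b Hb.
  destruct (classic (exists a, m a = b)) as [[a <-] | H].
  - apply in_map, Hl. now rewrite push_coeffs_image in Hb.
  - now rewrite push_coeffs_out in Hb.
Defined.

Lemma push_strict_mono : strict_mono push.
Proof.
  intros f g [d [H1 H2]]. exists (m d). simpl. rewrite !push_coeffs_image. split; auto.
  intros b Hb. destruct (classic (exists a, m a = b)) as [[a <-] | H].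
  - rewrite !push_coeffs_image. apply H2, (strict_mono_reflect HA HB m Hm), Hb.
  - now rewrite !push_coeffs_out.
Qed.
End OmegaPowMonotone.

Lemma omega_pow_ord_le (A B : LO) : is_wellorder A -> is_wellorder B -> ord_le A B ->
  exists j : omega_pow A -> omega_pow B, strict_mono j.
Proof. intros HA HB [m [Hm _]]. exists (push HA HB m Hm). apply push_strict_mono. Qed.

Section Collapse.
Context {X : LO} (HX : is_wellorder X) (Z : X -> Prop).
Let T := subLO X Z.
Let HT : is_wellorder T := subLO_wellorder X Z HX.

(* The transitive collapse of [Z] onto an initial segment of [X]. *)
Definition collapse : T -> X :=
  Fix (wo_wf HT) (fun _ => X)
    (fun z rec => wo_least (fun x => forall z' (H : lt z' z), lt (rec z' H) x) (proj1_sig z)).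

Lemma collapse_eq z :
  collapse z = wo_least (fun x => forall z', lt z' z -> lt (collapse z') x) (proj1_sig z).
Proof.
  unfold collapse. rewrite Fix_eq; [reflexivity |].
  intros x f g Hfg. replace g with f; auto.
  apply functional_extensionality_dep; intro y. apply functional_extensionality_dep; auto.
Qed.

Lemma collapse_spec z :
  le (collapse z) (proj1_sig z) /\ forall z', lt z' z -> lt (collapse z') (collapse z).
Proof.
  induction z as [z IH] using (well_founded_ind (wo_wf HT)).
  assert (Hbelow : forall z', lt z' z -> lt (collapse z') (proj1_sig z)).
  { intros z' Hz'. apply (wo_le_lt_trans HX _ (proj1_sig z')); [apply IH |]; exact Hz'. }
  destruct (wo_least_spec HX (fun x => forall z', lt z' z -> lt (collapse z') x) (proj1_sig z))
    as [H1 H2]; [eauto |].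
  rewrite collapse_eq. auto.
Qed.

Lemma collapse_strict_mono : strict_mono collapse.
Proof. intros x y H. now apply collapse_spec. Qed.

Lemma collapse_down_closed z x : lt x (collapse z) -> exists z', collapse z' = x.
Proof.
  revert x. induction z as [z IH] using (well_founded_ind (wo_wf HT)). intros x Hx.
  destruct (classic (forall z', lt z' z -> lt (collapse z') x)) as [Hall | Hn].
  - exfalso. rewrite collapse_eq in Hx.
    destruct (wo_least_spec HX (fun x => forall z', lt z' z -> lt (collapse z') x) (proj1_sig z))
      as [_ Hmin]; [eauto |].
    exact (wo_le_not_lt HX _ _ (Hmin x Hall) Hx).
  - apply not_all_ex_not in Hn. destruct Hn as [z' Hz']. apply imply_to_and in Hz'.
    destruct Hz' as [Hz'z Hnlt]. destruct (wo_not_lt HX _ _ Hnlt) as [Hl | He]; eauto.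
Qed.

Lemma collapse_iso : (forall x, exists z, collapse z = x) -> ord_iso T X.
Proof.
  intros Hs. exists collapse. split.
  - exists (fun x => proj1_sig (constructive_indefinite_description _ (Hs x))). split.
    + intros z. destruct constructive_indefinite_description as [z' Hz']; simpl.
      exact (strict_mono_inj HT HX collapse collapse_strict_mono _ _ Hz').
    + intros x. now destruct constructive_indefinite_description.
  - intros x y; split;
      [apply collapse_strict_mono | apply (strict_mono_reflect HT HX), collapse_strict_mono].
Qed.

(* If [collapse] were not onto, its range would be an initial segment bounded by some [g],
   while [collapse] composed with [h] is strictly monotone on [X], hence above the identity. *)
Lemma subLO_iso_of_strict_mono (h : X -> T) : strict_mono h -> ord_iso T X.
Proof.
  intros Hh. apply collapse_iso. apply NNPP. intros Hn. apply not_all_ex_not in Hn.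
  destruct Hn as [g Hg].
  assert (Hbound : forall z, lt (collapse z) g).
  { intros z. destruct (wo_total HX (collapse z) g) as [? | [He | Hl]]; auto;
      exfalso; apply Hg; eauto.
    exact (collapse_down_closed z g Hl). }
  assert (Hmono : strict_mono (fun x => collapse (h x))).
  { intros x y Hxy. apply collapse_strict_mono, Hh, Hxy. }
  exact (wo_le_not_lt HX _ _ (strict_mono_ge_id HX _ Hmono g) (Hbound (h g))).
Qed.
End Collapse.

Section Cofinality.
Context {K W : LO} (HK : is_wellorder K) (HW : is_wellorder W)
  (c : K -> W) (Hc : strict_mono c) (Hcof : cofinal_map c) (Hcf : cf_ge W K).

Definition bounded (B : K -> Prop) := exists b, forall x, B x -> lt x b.
Definition unbounded (B : K -> Prop) := forall b, exists x, B x /\ le b x.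

Lemma not_bounded_unbounded B : ~ bounded B -> unbounded B.
Proof.
  intros H b. apply NNPP. intros Hn. apply H. exists b. intros x Hx.
  apply (wo_not_le HK). intro. apply Hn. eauto.
Qed.

Lemma unbounded_not_bounded B : unbounded B -> ~ bounded B.
Proof.
  intros H [b Hb]. destruct (H b) as [x [Hx Hl]]. exact (wo_le_not_lt HK _ _ Hl (Hb x Hx)).
Qed.

Lemma bounded_sub (A B : K -> Prop) : (forall x, A x -> B x) -> bounded B -> bounded A.
Proof. intros H [b Hb]; exists b; auto. Qed.

Lemma bounded_union (A B : K -> Prop) : bounded A -> bounded B -> bounded (fun x => A x \/ B x).
Proof.
  intros [a Ha] [b Hb]. destruct (wo_total HK a b) as [Hl | [<- | Hl]].
  - exists b. intros x [Hx | Hx]; eauto using wo_trans.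
  - exists a. intros x [Hx | Hx]; auto.
  - exists a. intros x [Hx | Hx]; eauto using wo_trans.
Qed.

(* The cofinal sequence [c] restricted to an unbounded [H] is still cofinal in [W],
   so [H] has order type at least [K] and is therefore a copy of [K]. *)
Lemma unbounded_enum (H : K -> Prop) :
  unbounded H -> exists b : K -> K, strict_mono b /\ forall x, H (b x).
Proof.
  intros Hu. apply ord_iso_sub_enum.
  destruct (Hcf (subLO K H) (subLO_wellorder K H HK) (fun z => c (proj1_sig z))) as [m [Hm _]].
  - intros x y Hxy. apply Hc, Hxy.
  - intros w. destruct (Hcof w) as [x Hx]. destruct (Hu x) as [x' [Hx' Hl]].
    exists (exist H x' Hx'). apply (wo_le_trans HW _ (c x)); auto. now apply strict_mono_le.
  - exact (subLO_iso_of_strict_mono HK H m Hm).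
Qed.

(* A [K]-sequence inside the range of an injection [g]: the indices [x] at which [c] exceeds
   all earlier values (earlier in the order induced by [g]) form a cofinal subset of [W];
   ordered by [g], its order type is therefore at least [K]. *)
Lemma injective_range_enum (g : K -> K) : (forall x y, g x = g y -> x = y) ->
  exists h : K -> K, strict_mono h /\ forall x, exists y, h x = g y.
Proof.
  intros Hg.
  set (record := fun x => forall x', lt (g x') (g x) -> lt (c x') (c x)).
  set (R := mkLO {x | record x} (fun a b => lt (g (proj1_sig a)) (g (proj1_sig b)))).
  assert (HR : is_wellorder R).
  { apply (wellorder_pullback K _ (fun a => g (proj1_sig a)) HK).
    intros a b Hab. now apply proj1_sig_inj, Hg. }
  destruct (Hcf R HR (fun a => c (proj1_sig a))) as [m [Hm _]].
  - intros a [b Hb] Hab. exact (Hb _ Hab).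
  - intros w. destruct (Hcof w) as [x Hx].
    destruct (wo_least_exists HK (fun y => exists x', g x' = y /\ le (c x) (c x')))
      as [y [[xs [Hxs Hcxs]] Hmin]]; [exists (g x), x; split; [| right]; reflexivity |].
    assert (Hrec : record xs).
    { intros x' Hx'. rewrite Hxs in Hx'. apply (wo_lt_le_trans HW _ (c x)); auto.
      apply (wo_not_le HW). intros Hl.
      exact (wo_le_not_lt HK _ _ (Hmin _ (ex_intro _ x' (conj eq_refl Hl))) Hx'). }
    exists (exist _ xs Hrec). exact (wo_le_trans HW _ _ _ Hx Hcxs).
  - exists (fun x => g (proj1_sig (m x))). split; [intros x y Hxy; exact (Hm _ _ Hxy) | eauto].
Qed.

Lemma unbounded_not_small H : unbounded H -> ~ small K H.
Proof.
  intros Hu Hs. destruct (unbounded_enum H Hu) as [b [Hb HbH]]. apply Hs.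
  exists (fun x => exist _ (b x) (HbH x)). intros x y Hxy.
  apply (strict_mono_inj HK HK b Hb). exact (f_equal (@proj1_sig _ _) Hxy).
Qed.

Lemma bounded_small B : bounded B -> small K B.
Proof.
  intros [bt Hbt] [f Hf].
  destruct (injective_range_enum (fun x => proj1_sig (f x))) as [h [Hh Hrange]].
  { intros x y Hxy. now apply Hf, proj1_sig_inj. }
  destruct (Hrange bt) as [y Hy].
  apply (wo_le_not_lt HK _ _ (strict_mono_ge_id HK h Hh bt)).
  rewrite Hy. exact (Hbt _ (proj2_sig (f y))).
Qed.

Lemma small_bounded B : small K B -> bounded B.
Proof.
  intros Hs. apply NNPP. intros Hb. exact (unbounded_not_small B (not_bounded_unbounded B Hb) Hs).
Qed.
End Cofinality.

Section WeaklyMonotone.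
Context {V K : LO} (HV : is_wellorder V) (HK : is_wellorder K) (f : V -> K)
  (Hf : forall u u', lt u u' -> le (f u) (f u')).

Lemma lt_of_image_lt u u' : lt (f u) (f u') -> lt u u'.
Proof.
  intros H. apply (wo_not_le HV). intros [Hlt | ->].
  - exact (wo_le_not_lt HK _ _ (Hf _ _ Hlt) H).
  - exact (wo_irrefl HK _ H).
Qed.

Definition fibre_least (u : V) := forall u', f u' = f u -> le u u'.

Lemma fibre_least_exists u : exists u0, f u0 = f u /\ fibre_least u0.
Proof.
  destruct (wo_least_exists HV (fun y => f y = f u)) as [u0 [Hu0 Hmin]]; [eauto |].
  exists u0. split; auto. intros u' Hu'. apply Hmin. congruence.
Qed.

Lemma fibre_least_lt u u' : fibre_least u' -> lt u u' -> lt (f u) (f u').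
Proof.
  intros Hleast Hlt. destruct (Hf _ _ Hlt) as [Hl | He]; auto.
  exfalso. exact (wo_le_not_lt HV _ _ (Hleast _ He) Hlt).
Qed.

Lemma weakly_mono_no_max_enum : cf_ge V K -> (forall u, exists u', lt (f u) (f u')) ->
  exists h : K -> K, strict_mono h /\ forall y, exists u, h y = f u.
Proof.
  intros HcfV Hnomax.
  destruct (HcfV (subLO V fibre_least) (subLO_wellorder V _ HV) (@proj1_sig _ _))
    as [m [Hm _]].
  - intros a b H; exact H.
  - intros u. destruct (Hnomax u) as [u' Hu'].
    destruct (fibre_least_exists u') as [u0 [Hu0 Hleast]].
    exists (exist _ u0 Hleast). left. simpl. apply lt_of_image_lt. now rewrite Hu0.
  - exists (fun y => f (proj1_sig (m y))). split; [| eauto].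
    intros a b Hab. exact (fibre_least_lt _ _ (proj2_sig (m b)) (Hm a b Hab)).
Qed.

Lemma least_preimages_unbounded (R : K -> Prop) : (forall y : K, exists y', lt y y') ->
  (forall y, exists u, R (f u) /\ le y (f u)) -> unbounded (fun u => R (f u) /\ fibre_least u).
Proof.
  intros Hnomax HR b. destruct (Hnomax (f b)) as [y Hy]. destruct (HR y) as [u [HRu Hyu]].
  destruct (fibre_least_exists u) as [u0 [Hu0 Hleast]].
  exists u0. split; [split; [congruence | exact Hleast] |].
  apply (wo_not_lt HV). intros Hlt.
  apply (wo_le_not_lt HK _ _ Hyu). rewrite <- Hu0.
  exact (wo_le_lt_trans HK _ _ _ (Hf _ _ Hlt) Hy).
Qed.
End WeaklyMonotone.

Section SeparativeQuotient.
Context {P : PO} (ple_refl : forall p : P, ple p p)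
  (ple_trans : forall p q r : P, ple p q -> ple q r -> ple p r).

Lemma ple_sep_le (p q : P) : ple p q -> sep_le p q.
Proof. intros H r Hr. exists r. split; [apply ple_refl | eauto]. Qed.

Lemma sep_le_refl (p : P) : sep_le p p.
Proof. apply ple_sep_le, ple_refl. Qed.

Lemma sep_le_trans (p q r : P) : sep_le p q -> sep_le q r -> sep_le p r.
Proof.
  intros Hpq Hqr t Ht. destruct (Hpq t Ht) as [s [Hst Hsq]].
  destruct (Hqr s Hsq) as [s' [Hs's Hs'r]].
  exists s'. split; eauto.
Qed.

Definition sq_class (p : P) : sq P := exist _ (sep_equiv p) (ex_intro _ p eq_refl).

Lemma sq_class_surj (C : sq P) : exists p, C = sq_class p.
Proof. destruct C as [C [p Hp]]. exists p. now apply proj1_sig_inj. Qed.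

Lemma sq_class_le (p q : P) : sep_le p q -> ple (sq_class p) (sq_class q).
Proof.
  intros H. exists p, q. repeat split; auto using sep_le_refl.
Qed.

Lemma compat_sq_class (p q : P) : compat p q -> compat (sq_class p) (sq_class q).
Proof.
  intros [r [Hrp Hrq]]. exists (sq_class r). split; apply sq_class_le, ple_sep_le; assumption.
Qed.

Lemma sq_class_compat (p q : P) : compat (sq_class p) (sq_class q) -> compat p q.
Proof.
  intros [C [[r1 [p1 [Hr1 [Hp1 H1]]]] [r2 [q1 [Hr2 [Hq1 H2]]]]]].
  destruct (sq_class_surj C) as [r ->]. simpl in *.
  assert (Hrp : sep_le r p).
  { apply (sep_le_trans _ r1); [apply Hr1 |]. apply (sep_le_trans _ p1); [exact H1 | apply Hp1]. }
  assert (Hrq : sep_le r q).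
  { apply (sep_le_trans _ r2); [apply Hr2 |]. apply (sep_le_trans _ q1); [exact H2 | apply Hq1]. }
  destruct (Hrp r (ple_refl r)) as [s [Hsr Hsp]]. destruct (Hrq s Hsr) as [s' [Hs's Hs'q]].
  exists s'. eauto.
Qed.
End SeparativeQuotient.

Section PkappaBounded.
Context {K W : LO} (HK : is_wellorder K) (HW : is_wellorder W)
  (c : K -> W) (Hc : strict_mono c) (Hcof : cofinal_map c) (Hcf : cf_ge W K) (k0 : K).

Let small_bounded := small_bounded HK HW c Hc Hcof Hcf.
Let bounded_small := bounded_small HK HW c Hcof Hcf.

Definition pk_rep (C : Pkappa K) : K -> Prop :=
  proj1_sig (constructive_indefinite_description _ (proj2_sig C)).

Lemma pk_rep_spec C :
  ~ small K (pk_rep C) /\ proj1_sig C = (fun B => small K (symdiff K (pk_rep C) B)).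
Proof. unfold pk_rep. now destruct constructive_indefinite_description. Qed.

Definition pk_class (A : K -> Prop) (HA : unbounded A) : Pkappa K :=
  exist _ (fun B => small K (symdiff K A B))
    (ex_intro _ A (conj (unbounded_not_small HK HW c Hc Hcof Hcf A HA) eq_refl)).

Lemma pk_rep_unbounded C : unbounded (pk_rep C).
Proof.
  apply (not_bounded_unbounded HK). intros Hb. apply (proj1 (pk_rep_spec C)), bounded_small, Hb.
Qed.

Lemma pk_mem_bounded (C : Pkappa K) (B : K -> Prop) :
  proj1_sig C B -> bounded (symdiff K (pk_rep C) B).
Proof. rewrite (proj2 (pk_rep_spec C)). apply small_bounded. Qed.

Lemma small_empty (A : K -> Prop) : (forall x, ~ A x) -> small K A.
Proof. intros H. apply bounded_small. exists k0. intros x Hx. now destruct (H x). Qed.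

Lemma pk_mem_rep C : proj1_sig C (pk_rep C).
Proof. rewrite (proj2 (pk_rep_spec C)). apply small_empty. intros x [[] | []]; tauto. Qed.

Lemma pk_class_mem (A : K -> Prop) (HA : unbounded A) : proj1_sig (pk_class A HA) A.
Proof. apply small_empty. intros x [[] | []]; tauto. Qed.

Lemma pk_le_bounded_diff (C C' : Pkappa K) (B : K -> Prop) :
  ple C C' -> proj1_sig C' B -> bounded (fun x => pk_rep C x /\ ~ B x).
Proof.
  intros [A1 [B1 [HA1 [HB1 Hs]]]] HB.
  pose proof (pk_mem_bounded _ _ HA1) as H1. pose proof (pk_mem_bounded _ _ HB1) as H2.
  pose proof (pk_mem_bounded _ _ HB) as H3. apply small_bounded in Hs.
  eapply bounded_sub;
    [| exact (bounded_union HK _ _ H1 (bounded_union HK _ _ Hs (bounded_union HK _ _ H2 H3)))].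
  unfold symdiff. intros x [Hx HnB]. tauto.
Qed.

Lemma pk_compat_iff (C1 C2 : Pkappa K) :
  compat C1 C2 <-> unbounded (fun x => pk_rep C1 x /\ pk_rep C2 x).
Proof.
  split.
  - intros [C3 [H31 H32]].
    apply (fun H => pk_le_bounded_diff _ _ _ H (pk_mem_rep C1)) in H31.
    apply (fun H => pk_le_bounded_diff _ _ _ H (pk_mem_rep C2)) in H32.
    apply (not_bounded_unbounded HK). intros Hb.
    apply (unbounded_not_bounded HK _ (pk_rep_unbounded C3)).
    eapply bounded_sub; [| exact (bounded_union HK _ _ Hb (bounded_union HK _ _ H31 H32))].
    intros x Hx. tauto.
  - intros Hu. exists (pk_class _ Hu).
    assert (Hle : forall C, (forall x, pk_rep C1 x /\ pk_rep C2 x -> pk_rep C x) ->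
              ple (pk_class _ Hu) C).
    { intros C HC. exists (fun x => pk_rep C1 x /\ pk_rep C2 x), (pk_rep C).
      repeat split; [| apply pk_mem_rep |]; apply small_empty; unfold symdiff; firstorder. }
    split; apply Hle; tauto.
Qed.
End PkappaBounded.

Section Embedding.
Context {D K : LO} (Dx : K -> LO)
  (HD : is_wellorder D) (HK : is_wellorder K) (HDx : forall x, is_wellorder (Dx x)).
Notation W := (omega_pow D).
Let HW : is_wellorder W := omega_pow_wellorder HD.
Context (c : K -> W) (Hc : strict_mono c) (Hcof : cofinal_map c) (HcfW : cf_ge W K).
Context (phi : W -> osum K (fun x => omega_pow (Dx x)))
  (phi_inv : osum K (fun x => omega_pow (Dx x)) -> W)
  (phi_phi_inv : forall s, phi (phi_inv s) = s)
  (phi_lt : forall x y, lt x y <-> lt (phi x) (phi y)).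
Context (Hmono : forall x z : K, lt x z -> ord_le (Dx x) (Dx z))
  (HcfX : forall x : K, cf_ge (omega_pow (Dx x)) K) (d0 : D).

Definition block (w : W) : K := projT1 (phi w).
Definition block_elt (x : K) (v : omega_pow (Dx x)) : W := phi_inv (existT _ x v).

Lemma block_le_of_lt w w' : lt w w' -> le (block w) (block w').
Proof.
  intros H. apply phi_lt in H. unfold block. destruct (phi w) as [a u], (phi w') as [b v].
  simpl in *. destruct H as [H | [E _]]; [left | right]; auto.
Qed.

Lemma block_le w w' : le w w' -> le (block w) (block w').
Proof. intros [H | ->]; [now apply block_le_of_lt | now right]. Qed.

Lemma lt_of_block_lt w w' : lt (block w) (block w') -> lt w w'.
Proof.
  intros H. apply (wo_not_le HW). intros Hle.
  exact (wo_le_not_lt HK _ _ (block_le _ _ Hle) H).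
Qed.

Lemma block_block_elt x v : block (block_elt x v) = x.
Proof. unfold block, block_elt. now rewrite phi_phi_inv. Qed.

Lemma block_elt_strict_mono x : strict_mono (block_elt x).
Proof.
  intros u v H. apply phi_lt. unfold block_elt. rewrite !phi_phi_inv. right. now exists eq_refl.
Qed.

Lemma block_elt_lt x x' u v : lt x x' -> lt (block_elt x u) (block_elt x' v).
Proof. intros H. apply lt_of_block_lt. now rewrite !block_block_elt. Qed.

Lemma K_no_max (x : K) : exists y, lt x y.
Proof.
  destruct (Hcof (shift d0 1 (c x))) as [y Hy]. exists y.
  apply (strict_mono_reflect HK HW c Hc).
  exact (wo_lt_le_trans HW _ _ _ (lt_shift_succ HD d0 _) Hy).
Qed.

Definition copy (Z : W -> Prop) := ord_iso (subLO W Z) W.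

Lemma copy_of_strict_mono (Z : W -> Prop) (g : W -> W) :
  strict_mono g -> (forall w, Z (g w)) -> copy Z.
Proof.
  intros Hg HZ. apply (subLO_iso_of_strict_mono HW Z (fun w => exist Z (g w) (HZ w))).
  intros w w' H. exact (Hg _ _ H).
Qed.

Lemma copy_above (Y : W -> Prop) (u : W) : copy Y -> copy (fun w => Y w /\ le u w).
Proof.
  intros HY. destruct (ord_iso_sub_enum W Y HY) as [P [HP HPY]].
  destruct (omega_pow_embed_above HD u) as [s [Hs Hus]].
  apply (copy_of_strict_mono _ (fun v => P (s v))).
  - intros v v' H. apply HP, Hs, H.
  - intros v. split; auto.
    apply (wo_le_trans HW _ (P u)); [apply strict_mono_ge_id | apply strict_mono_le]; auto.
Qed.

Lemma copy_unbounded_blocks (Z : W -> Prop) (b : K) : copy Z -> exists w, Z w /\ le b (block w).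
Proof.
  intros HZ. destruct (ord_iso_sub_enum W Z HZ) as [P [HP HPZ]].
  exists (P (block_elt b (omega_pow_zero))). split; auto.
  rewrite <- (block_block_elt b omega_pow_zero) at 1.
  apply block_le, (strict_mono_ge_id HW), HP.
Qed.

(* Stretch block [x] of [W] into block [b x] (possible since [Dx x <= Dx (b x)]),
   where [b] enumerates [H], and then into [Z] along [e (b x)]. *)
Lemma copy_of_blocks (Z : W -> Prop) (H : K -> Prop) (t : K -> K)
  (e : forall x, omega_pow (Dx x) -> W) :
  unbounded H -> (forall x, H x -> strict_mono (e x)) ->
  (forall x v, H x -> Z (e x v) /\ block (e x v) = t x) ->
  (forall x y, H x -> H y -> lt x y -> lt (t x) (t y)) -> copy Z.
Proof.
  intros Hu He HeZ Ht.
  destruct (unbounded_enum HK HW c Hc Hcof HcfW H Hu) as [b [Hb HbH]].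
  assert (Hstretch : forall x, exists j : omega_pow (Dx x) -> omega_pow (Dx (b x)), strict_mono j).
  { intros x. destruct (strict_mono_ge_id HK b Hb x) as [Hl | E].
    - apply omega_pow_ord_le; auto.
    - rewrite <- E. now exists (fun v => v). }
  set (j := fun x => proj1_sig (constructive_indefinite_description _ (Hstretch x))).
  assert (Hj : forall x, strict_mono (j x))
    by (intros x; exact (proj2_sig (constructive_indefinite_description _ (Hstretch x)))).
  apply (copy_of_strict_mono _ (fun w => let (x, v) := phi w in e (b x) (j x v))).
  - intros w w' Hww'. apply phi_lt in Hww'.
    destruct (phi w) as [x v], (phi w') as [x' v']. simpl in Hww'.
    destruct Hww' as [Hl | [E Hl]].
    + apply lt_of_block_lt. rewrite (proj2 (HeZ _ _ (HbH x))), (proj2 (HeZ _ _ (HbH x'))).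
      auto.
    + simpl in E. subst x'. apply (He (b x) (HbH x)), Hj, Hl.
  - intros w. destruct (phi w) as [x v]. apply HeZ, HbH.
Qed.

Lemma copy_block_preimage (A : K -> Prop) : unbounded A -> copy (fun w => A (block w)).
Proof.
  intros Hu. apply (copy_of_blocks _ A (fun x => x) block_elt Hu).
  - intros; apply block_elt_strict_mono.
  - intros x v Hx. now rewrite block_block_elt.
  - auto.
Qed.

(* Within a block, an embedding of [W] cannot climb through [K] many blocks: it would then
   have to stay below the image of the next block, yet go beyond every block. *)
Lemma block_image_max (P : W -> W) (x : K) : strict_mono P ->
  exists u0, forall u, le (block (P (block_elt x u))) (block (P (block_elt x u0))).
Proof.
  intros HP. set (f := fun u => block (P (block_elt x u))).
  assert (Hf : forall u u', lt u u' -> le (f u) (f u')).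
  { intros u u' H. apply block_le_of_lt, HP, block_elt_strict_mono, H. }
  apply NNPP. intros Hn.
  destruct (weakly_mono_no_max_enum (omega_pow_wellorder (HDx x)) HK f Hf (HcfX x))
    as [h [Hh Hrange]].
  { intros u. apply NNPP. intros Hu. apply Hn. exists u. intros u'.
    apply (wo_not_lt HK). intros Hlt. apply Hu. eauto. }
  destruct (K_no_max x) as [x' Hx'].
  destruct (K_no_max (block (P (block_elt x' omega_pow_zero)))) as [y Hy].
  destruct (Hrange y) as [u Hu].
  apply (wo_le_not_lt HK _ _ (strict_mono_ge_id HK h Hh y)). rewrite Hu.
  refine (wo_le_lt_trans HK _ _ _ _ Hy).
  apply block_le_of_lt, HP, block_elt_lt, Hx'.
Qed.

(* Past the point [u0] where the image of block [x] reaches its last block [m],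
   the embedding maps a copy of block [x] into block [m]. *)
Lemma copy_block_tail (Y : W -> Prop) (P : W -> W) (x : K) :
  strict_mono P -> (forall w, Y (P w)) ->
  exists m (e : omega_pow (Dx x) -> W),
    (exists u, block (P (block_elt x u)) = m) /\ (forall u, le (block (P (block_elt x u))) m) /\
    strict_mono e /\ forall v, Y (e v) /\ block (e v) = m.
Proof.
  intros HP HPY. destruct (block_image_max P x HP) as [u0 Hmax].
  destruct (omega_pow_embed_above (HDx x) u0) as [s [Hs Hu0s]].
  exists (block (P (block_elt x u0))), (fun v => P (block_elt x (s v))).
  split; [eauto | split; [| split]]; auto.
  - intros v v' H. apply HP, block_elt_strict_mono, Hs, H.
  - intros v. split; auto. apply (wo_le_antisym HK); auto.
    apply block_le, (strict_mono_le _ HP), (strict_mono_le _ (block_elt_strict_mono x)), Hu0s.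
Qed.

Lemma copy_block_selection (Y : W -> Prop) : copy Y ->
  exists (t : K -> K) (e : forall x, omega_pow (Dx x) -> W),
    (forall x, le x (t x)) /\ (forall x y, lt x y -> le (t x) (t y)) /\
    (forall x, strict_mono (e x)) /\ (forall x v, Y (e x v) /\ block (e x v) = t x).
Proof.
  intros HY. destruct (ord_iso_sub_enum W Y HY) as [P [HP HPY]].
  pose proof (fun x => copy_block_tail Y P x HP HPY) as Htail.
  apply choice in Htail. destruct Htail as [t Ht].
  set (e := fun x => proj1_sig (constructive_indefinite_description _ (Ht x))).
  assert (He : forall x, (exists u, block (P (block_elt x u)) = t x) /\
                 (forall u, le (block (P (block_elt x u))) (t x)) /\
                 strict_mono (e x) /\ forall v, Y (e x v) /\ block (e x v) = t x)
    by (intros x; exact (proj2_sig (constructive_indefinite_description _ (Ht x)))).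
  exists t, e. split; [| split; [| split]]; try apply He.
  - intros x. destruct (He x) as [[u <-] _].
    rewrite <- (block_block_elt x u) at 1. apply block_le, (strict_mono_ge_id HW), HP.
  - intros x y Hxy. destruct (He x) as [[u <-] _].
    apply (wo_le_trans HK _ (block (P (block_elt y omega_pow_zero)))); [| apply He].
    apply block_le_of_lt, HP, block_elt_lt, Hxy.
Qed.

Notation PP := (Ppow D).

Lemma Ppow_refl (p : PP) : ple p p.
Proof. intros w h; exact h. Qed.

Lemma Ppow_trans (p q r : PP) : ple p q -> ple q r -> ple p r.
Proof. intros Hpq Hqr w h. exact (Hqr w (Hpq w h)). Qed.

Let pk_rep_unbounded := pk_rep_unbounded HK HW c Hcof HcfW.
Let pk_class := pk_class HK HW c Hc Hcof HcfW.
Let pk_le_bounded_diff := pk_le_bounded_diff HK HW c Hc Hcof HcfW.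
Let k0 : K := block omega_pow_zero.
Let pk_mem_rep := pk_mem_rep HK HW c Hcof HcfW k0.
Let pk_class_mem := pk_class_mem HK HW c Hc Hcof HcfW k0.
Let sq_class := @sq_class PP.
Let sq_class_le := sq_class_le Ppow_refl Ppow_trans.

Definition blocks_in (A : K -> Prop) (HA : unbounded A) : PP :=
  exist _ (fun w => A (block w)) (copy_block_preimage A HA).

Definition pk_embed (C : Pkappa K) : sq PP := sq_class (blocks_in (pk_rep C) (pk_rep_unbounded C)).

Lemma sep_le_blocks_in (A B : K -> Prop) (HA : unbounded A) (HB : unbounded B) :
  bounded (fun x => A x /\ ~ B x) -> sep_le (blocks_in A HA) (blocks_in B HB).
Proof.
  intros [b Hb] r Hr.
  exists (exist _ (fun w => proj1_sig r w /\ le (block_elt b omega_pow_zero) w)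
            (copy_above _ _ (proj2_sig r))).
  split; [intros w [h _]; exact h |].
  intros w [Hrw Hbw]. simpl. apply NNPP. intros Hn.
  apply block_le in Hbw. rewrite block_block_elt in Hbw.
  exact (wo_le_not_lt HK _ _ Hbw (Hb _ (conj (Hr w Hrw) Hn))).
Qed.

Lemma pk_embed_mono (C1 C2 : Pkappa K) : ple C1 C2 -> ple (pk_embed C1) (pk_embed C2).
Proof.
  intros H. apply sq_class_le, sep_le_blocks_in, (pk_le_bounded_diff _ _ _ H), pk_mem_rep.
Qed.

Lemma pk_embed_compat_iff (C1 C2 : Pkappa K) :
  compat (pk_embed C1) (pk_embed C2) <-> unbounded (fun x => pk_rep C1 x /\ pk_rep C2 x).
Proof.
  split.
  - intros H. apply (sq_class_compat Ppow_refl Ppow_trans) in H. destruct H as [r [Hr1 Hr2]].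
    intros b. destruct (copy_unbounded_blocks _ b (proj2_sig r)) as [w [Hw Hbw]].
    exists (block w). split; [split; [apply Hr1 | apply Hr2] |]; assumption.
  - intros Hu. apply (compat_sq_class Ppow_refl Ppow_trans).
    exists (blocks_in _ Hu). split; intros w h; apply h.
Qed.

(* Given a copy [Y], collect the blocks [t x] into which [Y] maps a tail of block [x];
   any condition below their class meets [Y] in a copy built from those blocks. *)
Lemma pk_embed_dense (q : sq PP) :
  exists p : Pkappa K, forall p', ple p' p -> compat (pk_embed p') q.
Proof.
  destruct (sq_class_surj q) as [Y ->].
  destruct (copy_block_selection _ (proj2_sig Y)) as [t [e [Ht_ge [Ht_mono [He HeY]]]]].
  set (A := fun m => exists x, t x = m).
  assert (HA : unbounded A)
    by (intros b; exists (t b); split; [exists b; reflexivity | apply Ht_ge]).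
  exists (pk_class A HA). intros p' Hp'. set (R := pk_rep p').
  assert (HRA : forall y, exists x, R (t x) /\ le y (t x)).
  { intros y. apply NNPP. intros Hn.
    apply (unbounded_not_bounded HK _ (pk_rep_unbounded p')).
    eapply bounded_sub;
      [| exact (bounded_union HK _ _ (pk_le_bounded_diff _ _ _ Hp' (pk_class_mem A HA))
                   (ex_intro _ y (fun x Hx => Hx)))].
    intros m Hm. destruct (classic (A m)) as [[x <-] | HnA]; [right | left; auto].
    apply (wo_not_le HK). intros Hle. apply Hn. eauto. }
  assert (HZ : copy (fun w => R (block w) /\ proj1_sig Y w)).
  { apply (copy_of_blocks _ (fun x => R (t x) /\ fibre_least t x) t e).
    - exact (least_preimages_unbounded HK HK t Ht_mono R K_no_max HRA).
    - intros x _; apply He.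
    - intros x v [HR _]. destruct (HeY x v) as [HY Hb]. rewrite Hb. auto.
    - intros x y _ [_ Hy] Hxy. exact (fibre_least_lt HK t Ht_mono x y Hy Hxy). }
  exists (sq_class (exist _ _ HZ)).
  split; apply sq_class_le, (ple_sep_le Ppow_refl Ppow_trans); intros w h; simpl in *; tauto.
Qed.

Lemma pk_embed_complete : complete_emb pk_embed.
Proof.
  split; [exact pk_embed_mono | split; [| exact pk_embed_dense]].
  intros C1 C2. rewrite (pk_compat_iff HK HW c Hc Hcof HcfW k0), pk_embed_compat_iff. tauto.
Qed.
End Embedding.

Theorem mainTheorem8 (D K : LO) (Dx : K -> LO) :
  is_wellorder D ->
  is_wellorder K ->
  (forall x, is_wellorder (Dx x)) ->
  cf_eq (omega_pow D) K ->
  ord_le natLO K ->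
  ord_iso (omega_pow D) (osum K (fun x => omega_pow (Dx x))) ->
  (forall x z : K, lt x z -> ord_le (Dx x) (Dx z)) ->
  (forall x : K, cf_ge (omega_pow (Dx x)) K) ->
  exists f : Pkappa K -> sq (Ppow D), complete_emb f.
Proof.
  intros HD HK HDx [[c [Hc Hcof]] HcfW] [n [Hn _]] [phi [[phi_inv [_ Hphi]] Hlt]] Hmono HcfX.
  (* [c] takes two distinct values, so [D] is nonempty. *)
  assert (H01 : @lt natLO 0 1) by (simpl; auto).
  destruct (Hc _ _ (Hn _ _ H01)) as [d0 _].
  eexists.
  exact (pk_embed_complete Dx HD HK HDx c Hc Hcof HcfW phi phi_inv Hphi Hlt Hmono HcfX d0).
Qed.
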